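(* Let $k$ be an infinite field, let $A$ be a finitely generated $k$-algebra, let $s$ be a positive integer, and let $A[t]$ be the polynomial extension with $t$ a central indeterminate. Then $J_{s+1}(A[t])=J_s(A)[t]$.
   Context: For a $k$-algebra $R$ and positive integer $s$, a codimension $1$ ideal of tangent dimension $s$ is a two-sided ideal $I\subseteq R$ with $\dim_k R/I=1$ and $\dim_k I/I^2=s$; $J_s(R)$ is the intersection of all such ideals (and $J_s(R)=R$ if there are none). For an ideal $J\subseteq A$, $J[t]$ denotes the set of polynomials in $t$ with coefficients in $J$. *)

From HB Require Import structures.
From mathcomp Require Import all_boot all_order all_algebra.
Set Implicit Arguments. Unset Strict Implicit. Unset Printing Implicit Defensive.
Import Order.TTheory GRing.Theory Num.Theory.
Local Open Scope ring_scope.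

(* Subsets of a type are Prop-valued predicates (R may be infinite-dimensional). *)

Definition is_ideal (k : fieldType) (R : nzRingType) (sc : k -> R -> R)
    (I : R -> Prop) : Prop :=
  I 0 /\
  (forall x y, I x -> I y -> I (x + y)) /\
  (forall x, I x -> I (- x)) /\
  (forall c x, I x -> I (sc c x)) /\
  (forall r x, I x -> I (r * x)) /\
  (forall r x, I x -> I (x * r)).

Inductive ideal_sq (R : nzRingType) (I : R -> Prop) : R -> Prop :=
| isq_mul x y : I x -> I y -> ideal_sq I (x * y)
| isq_0 : ideal_sq I 0
| isq_add a b : ideal_sq I a -> ideal_sq I b -> ideal_sq I (a + b)
| isq_opp a : ideal_sq I a -> ideal_sq I (- a).

(* dim_k V/W = n, for k-subspaces W of V of R (k acting via [sc]):
   there are v_0, ..., v_{n-1} in V whose classes form a k-basis of V/W. *)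
Definition quot_dim (k : fieldType) (R : nzRingType) (sc : k -> R -> R)
    (V W : R -> Prop) (n : nat) : Prop :=
  exists v : 'I_n -> R,
    [/\ (forall i, V (v i)),
        (forall x, V x -> exists c : 'I_n -> k,
             W (x - \sum_(i < n) sc (c i) (v i))) &
        (forall c : 'I_n -> k, W (\sum_(i < n) sc (c i) (v i)) ->
             forall i, c i = 0)].

(* J_s(R): intersection of all codimension 1 ideals of tangent dimension s
   (all of R if there are none). *)
Definition Jtan (k : fieldType) (R : nzRingType) (sc : k -> R -> R)
    (s : nat) (x : R) : Prop :=
  forall I : R -> Prop,
    is_ideal sc I ->
    quot_dim sc (fun _ => True) I 1 ->
    quot_dim sc I (ideal_sq I) s ->
    I x.

Definition alg_scale (k : fieldType) (A : algType k) (c : k) (a : A) : A :=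
  c *: a.
Definition poly_scale (k : fieldType) (A : algType k) (c : k) (p : {poly A})
  : {poly A} := (c%:A : A) *: p.

Inductive in_subalg (k : fieldType) (A : algType k) (gs : seq A) : A -> Prop :=
| sa_gen a : a \in gs -> in_subalg gs a
| sa_one : in_subalg gs 1
| sa_add a b : in_subalg gs a -> in_subalg gs b -> in_subalg gs (a + b)
| sa_mul a b : in_subalg gs a -> in_subalg gs b -> in_subalg gs (a * b)
| sa_scale (c : k) a : in_subalg gs a -> in_subalg gs (c *: a).

Definition fin_gen_alg (k : fieldType) (A : algType k) : Prop :=
  exists gs : seq A, forall a : A, in_subalg gs a.

Definition infinite_field (k : fieldType) : Prop :=
  forall s : seq k, exists x : k, x \notin s.

From Stdlib Require Import FunctionalExtensionality PropExtensionality.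
From HB Require Import structures.
From mathcomp Require Import all_boot all_order all_algebra.
Import GRing.Theory.
Local Open Scope ring_scope.
Set Implicit Arguments. Unset Strict Implicit.

(* A codimension 1 ideal I of A[t] contains t - l for some scalar l, hence
   I = {q | q(l) \in m} with m = I \cap A of codimension 1 in A.  Conversely
   every such pair (l, m) gives a codimension 1 ideal, whose square is
   {q | q(l) \in m^2, q'(l) \in m}; so I/I^2 = m/m^2 (+) k (t - l) and the
   tangent dimension goes up by exactly one.  Thus p lies in J_(s+1)(A[t]) iff
   p(l) \in m for every l and every m of tangent dimension s.  Modulo such an m
   each coefficient p_i is a scalar c_i, and p(l) \in m says that
   sum_i c_i l^i = 0 for all l, which over an infinite field forces c = 0. *)

Definition codim1 (k : fieldType) (R : nzRingType) (sc : k -> R -> R)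
    (I : R -> Prop) : Prop :=
  quot_dim sc (fun _ => True) I 1.

Definition tangent_dim (k : fieldType) (R : nzRingType) (sc : k -> R -> R)
    (I : R -> Prop) (n : nat) : Prop :=
  quot_dim sc I (ideal_sq I) n.

Section Ideal.
Variables (k : fieldType) (R : nzRingType) (sc : k -> R -> R) (I : R -> Prop).
Hypothesis idI : is_ideal sc I.

Lemma ideal_mem0 : I 0. Proof. by case: idI. Qed.
Lemma ideal_memD x y : I x -> I y -> I (x + y).
Proof. by case: idI => _ [D _]; apply: D. Qed.
Lemma ideal_memN x : I x -> I (- x).
Proof. by case: idI => _ [_ [N _]]; apply: N. Qed.
Lemma ideal_memZ c x : I x -> I (sc c x).
Proof. by case: idI => _ [_ [_ [Z _]]]; apply: Z. Qed.
Lemma ideal_memMl r x : I x -> I (r * x).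
Proof. by case: idI => _ [_ [_ [_ [Ml _]]]]; apply: Ml. Qed.
Lemma ideal_memMr r x : I x -> I (x * r).
Proof. by case: idI => _ [_ [_ [_ [_ Mr]]]]; apply: Mr. Qed.

Lemma ideal_memB x y : I x -> I y -> I (x - y).
Proof. by move=> Ix Iy; apply/ideal_memD/ideal_memN. Qed.

Lemma ideal_mem_sum n (F : 'I_n -> R) : (forall i, I (F i)) -> I (\sum_(i < n) F i).
Proof. by move=> IF; apply: big_ind => //; [exact: ideal_mem0 | exact: ideal_memD]. Qed.

Lemma ideal_congr x y : I (x - y) -> I x <-> I y.
Proof.
move=> Ixy; split=> [Ix | Iy]; last by rewrite -(subrK y x); exact: ideal_memD.
by have := ideal_memB Ix Ixy; rewrite opprB addrC subrK.
Qed.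

Hypothesis scaleA : forall a b x, sc a (sc b x) = sc (a * b) x.
Hypothesis scale1 : forall x, sc 1 x = x.
Hypothesis scaleBr : forall a x y, sc a (x - y) = sc a x - sc a y.
Hypothesis scale0 : forall x, sc 0 x = 0.

Lemma ideal_scale1_eq0 : ~ I 1 -> forall d, I (sc d 1) -> d = 0.
Proof.
move=> I1 d Id; apply/eqP/negPn/negP => d_neq0; apply: I1.
by rewrite -(scale1 1) -(mulVf d_neq0) -scaleA; exact: ideal_memZ.
Qed.

Lemma codim1P : codim1 sc I <-> ~ I 1 /\ forall y, exists d, I (y - sc d 1).
Proof.
split=> [[v [_ span free]] | [I1 span]].
- have I1 : ~ I 1.
    move=> I1; have := free (fun _ => 1) _ ord0; rewrite big_ord1 scale1 -[v ord0]mulr1.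
    by move/(_ (ideal_memMl (v ord0) I1)) => /eqP; rewrite oner_eq0.
  split=> // y; have [e] := span 1 Logic.I; have [c] := span y Logic.I.
  rewrite !big_ord1 => Ic Ie.
  have e_neq0 : e ord0 != 0.
    by apply/eqP=> e0; apply: I1; move: Ie; rewrite e0 scale0 subr0.
  exists (c ord0 / e ord0).
  (* subtract a multiple of [1 - e v] from [y - c v] to cancel [v] *)
  have -> : y - sc (c ord0 / e ord0) 1 =
      (y - sc (c ord0) (v ord0)) - sc (c ord0 / e ord0) (1 - sc (e ord0) (v ord0)).
    by rewrite scaleBr scaleA mulfVK // opprB addrA subrK.
  exact/ideal_memB/ideal_memZ.
- exists (fun _ => 1); split=> // [y _ | c].
  + by have [d Id] := span y; exists (fun _ => d); rewrite big_ord1.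
  + by rewrite big_ord1 => Ic i; rewrite (ord1 i); exact: ideal_scale1_eq0 Ic.
Qed.

End Ideal.

Lemma ideal_sqN (R : nzRingType) (I : R -> Prop) x :
  ideal_sq I (- x) <-> ideal_sq I x.
Proof. by split=> /isq_opp //; rewrite opprK. Qed.

Section Scalings.
Variables (k : fieldType) (A : algType k).

Lemma alg_scaleA a b (x : A) : alg_scale a (alg_scale b x) = alg_scale (a * b) x.
Proof. exact: scalerA. Qed.
Lemma alg_scale1 (x : A) : alg_scale 1 x = x.
Proof. exact: scale1r. Qed.
Lemma alg_scaleBr a (x y : A) : alg_scale a (x - y) = alg_scale a x - alg_scale a y.
Proof. exact: scalerBr. Qed.
Lemma alg_scale0 (x : A) : alg_scale 0 x = 0.
Proof. exact: scale0r. Qed.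

Lemma poly_scaleA a b (p : {poly A}) :
  poly_scale a (poly_scale b p) = poly_scale (a * b) p.
Proof. by rewrite /poly_scale scalerA mulr_algl scalerA. Qed.
Lemma poly_scale1 (p : {poly A}) : poly_scale 1 p = p.
Proof. by rewrite /poly_scale !scale1r. Qed.
Lemma poly_scaleBr a (p q : {poly A}) :
  poly_scale a (p - q) = poly_scale a p - poly_scale a q.
Proof. exact: scalerBr. Qed.
Lemma poly_scale0 (p : {poly A}) : poly_scale 0 p = 0.
Proof. by rewrite /poly_scale !scale0r. Qed.

Lemma poly_scaleC c (a : A) : poly_scale c a%:P = (c *: a)%:P.
Proof. by rewrite /poly_scale -mul_polyC -polyCM mulr_algl. Qed.

Lemma codim1_algP (m : A -> Prop) : is_ideal (@alg_scale k A) m ->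
  codim1 (@alg_scale k A) m <-> ~ m 1 /\ forall y, exists d, m (y - d *: 1).
Proof. move=> hm; exact: codim1P alg_scaleA alg_scale1 alg_scaleBr alg_scale0. Qed.

Lemma codim1_polyP (I : {poly A} -> Prop) : is_ideal (@poly_scale k A) I ->
  codim1 (@poly_scale k A) I <-> ~ I 1 /\ forall q, exists d, I (q - (d%:A)%:P).
Proof.
move=> hI; rewrite (codim1P hI poly_scaleA poly_scale1 poly_scaleBr poly_scale0).
have scale_1 d : poly_scale d 1 = (d%:A)%:P by exact: alg_polyC.
by split=> -[I1 span]; split=> // q; have [d Id] := span q; exists d;
  rewrite scale_1 in Id *.
Qed.

Lemma alg_ideal_scale1P (m : A -> Prop) : is_ideal (@alg_scale k A) m -> ~ m 1 ->
  forall d, m (d *: 1) <-> d = 0.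
Proof.
move=> hm m1 d; split=> [|->]; first exact: ideal_scale1_eq0 alg_scaleA alg_scale1 m1 d.
by rewrite scale0r; exact: ideal_mem0 hm.
Qed.

End Scalings.

(* For a functional [dl] with [dl j != 0], [elim_vec u] re-expresses the
   combinations of [u] with coefficients in the kernel of [dl], and [elim_ext]
   is the inverse change of coordinates. *)
Section Elimination.
Variables (K : fieldType) (V : lmodType K) (n : nat).
Variables (dl : 'I_n.+1 -> K) (j : 'I_n.+1).
Hypothesis dlj_neq0 : dl j != 0.

Definition elim_vec (u : 'I_n.+1 -> V) (i : 'I_n) : V :=
  u (lift j i) - (dl (lift j i) / dl j) *: u j.

Definition elim_ext (c : 'I_n -> K) (i : 'I_n.+1) : K :=
  if unlift j i is Some i' then c i'
  else - (\sum_(i' < n) c i' * dl (lift j i')) / dl j.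

Lemma elim_ext_lift c i : elim_ext c (lift j i) = c i.
Proof. by rewrite /elim_ext liftK. Qed.

Lemma sum_elim_ext c : \sum_i elim_ext c i * dl i = 0.
Proof.
rewrite (bigD1_ord j) //= /elim_ext unlift_none divfK //.
by under eq_bigr => i _ do rewrite liftK; rewrite addNr.
Qed.

Lemma sum_elim (u : 'I_n.+1 -> V) (e : 'I_n.+1 -> K) : \sum_i e i * dl i = 0 ->
  \sum_i e i *: u i = \sum_i e (lift j i) *: elim_vec u i.
Proof.
rewrite !(bigD1_ord j) //= => /eqP; rewrite addrC addr_eq0 => /eqP e_dl.
have -> : e j = - (\sum_i e (lift j i) * dl (lift j i)) / dl j.
  by rewrite e_dl opprK mulfK.
under [RHS]eq_bigr => i _ do rewrite scalerBr scalerA.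
rewrite sumrB -scaler_suml addrC mulNr scaleNr; congr (_ - _ *: _).
by rewrite mulr_suml; apply: eq_bigr => i _; rewrite mulrA.
Qed.

End Elimination.

Section Evaluation.
Variables (k : fieldType) (A : algType k) (l : k).
Local Notation x := (l%:A : A).

Lemma hornerM_alg (p q : {poly A}) : (p * q).[x] = p.[x] * q.[x].
Proof. by rewrite hornerM_comm // /comm_poly mulr_algl mulr_algr. Qed.

Lemma horner_poly_scale c (p : {poly A}) : (poly_scale c p).[x] = c *: p.[x].
Proof. by rewrite /poly_scale -mul_polyC hornerCM mulr_algl. Qed.

Lemma deriv_poly_scale c (p : {poly A}) : (poly_scale c p)^`() = poly_scale c p^`().
Proof. exact: derivZ. Qed.

Lemma horner_comb n (e : 'I_n -> k) (w : 'I_n -> {poly A}) :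
  (\sum_i poly_scale (e i) (w i)).[x] = \sum_i e i *: (w i).[x].
Proof. by rewrite horner_sum; apply: eq_bigr => i _; rewrite horner_poly_scale. Qed.

Lemma deriv_comb n (e : 'I_n -> k) (w : 'I_n -> {poly A}) :
  (\sum_i poly_scale (e i) (w i))^`() = \sum_i poly_scale (e i) (w i)^`().
Proof. by rewrite raddf_sum; apply: eq_bigr => i _; exact: deriv_poly_scale. Qed.

End Evaluation.

Definition ev_ideal (k : fieldType) (A : algType k) (l : k) (m : A -> Prop)
    (q : {poly A}) : Prop :=
  m q.[l%:A].

Section EvIdeal.
Variables (k : fieldType) (A : algType k) (l : k) (m : A -> Prop).
Hypothesis hm : is_ideal (@alg_scale k A) m.
Local Notation x := (l%:A : A).
Local Notation I := (ev_ideal l m).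

Lemma ev_ideal_is_ideal : is_ideal (@poly_scale k A) I.
Proof.
rewrite /ev_ideal; split; first by rewrite horner0; exact: (ideal_mem0 hm).
split; first by move=> p q /= Ip Iq; rewrite hornerD; exact: (ideal_memD hm Ip Iq).
split; first by move=> p /= Ip; rewrite hornerN; exact: (ideal_memN hm Ip).
split; first by move=> c p /= Ip; rewrite horner_poly_scale; exact: (ideal_memZ hm _ Ip).
split=> r p /= Ip; rewrite hornerM_alg.
  exact: (ideal_memMl hm _ Ip).
exact: (ideal_memMr hm _ Ip).
Qed.

Lemma ideal_sq_polyC a : ideal_sq m a -> ideal_sq I a%:P.
Proof.
elim=> [a' b ha hb | | a' b _ ha _ hb | a' _ ha].
- by rewrite polyCM; apply: isq_mul; rewrite /ev_ideal hornerC.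
- exact: isq_0.
- by rewrite polyCD; apply: isq_add.
- by rewrite polyCN; apply: isq_opp.
Qed.

(* [q - q(l)] factors through [t - l]; the cofactor's value at [l] is [q'(l)]. *)
Lemma ideal_sq_ev_idealP q : ideal_sq I q <-> ideal_sq m q.[x] /\ m q^`().[x].
Proof.
split.
- elim=> [p r Ip Ir | | p r _ [p2 p'] _ [r2 r'] | p _ [p2 p']].
  + rewrite derivM hornerD !hornerM_alg; split; first exact: isq_mul.
    exact: (ideal_memD hm (ideal_memMl hm _ Ir) (ideal_memMr hm _ Ip)).
  + by rewrite deriv0 horner0; split; [exact: isq_0 | exact: (ideal_mem0 hm)].
  + by rewrite derivD !hornerD; split; [exact: isq_add | exact: (ideal_memD hm p' r')].
  + by rewrite derivN !hornerN; split; [exact: isq_opp | exact: (ideal_memN hm p')].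
- case=> q2 q'; rewrite -(subrK q.[x]%:P q) addrC.
  apply: isq_add; first exact: ideal_sq_polyC.
  have : root (q - q.[x]%:P) x by rewrite /root hornerD hornerN hornerC subrr.
  case/factor_theorem=> r def_q; rewrite def_q; apply: isq_mul.
  + move: q'; rewrite -[q^`()](subrK (q.[x]%:P^`())) -derivB def_q derivC.
    rewrite addr0 derivM hornerD !hornerM_alg hornerXsubC subrr derivXsubC.
    by rewrite mulr0 add0r hornerC mulr1.
  + by rewrite /ev_ideal hornerXsubC subrr; exact: (ideal_mem0 hm).
Qed.

Hypothesis hcm : codim1 (@alg_scale k A) m.

Lemma codim1_ev_ideal : codim1 (@poly_scale k A) I.
Proof.
have [m1 span] := (codim1_algP hm).1 hcm.
apply/(codim1_polyP ev_ideal_is_ideal); split=> [|q]; first by rewrite /ev_ideal hornerC.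
have [d Id] := span q.[x]; exists d.
by rewrite /ev_ideal hornerD hornerN hornerC.
Qed.

Section Criterion.
Variables (N : nat) (w : 'I_N -> {poly A}) (dl : 'I_N -> k).
Hypothesis hdl : forall i, m ((w i)^`().[x] - dl i *: 1).

Lemma ideal_sq_ev_subP (e : 'I_N -> k) q d : m (q^`().[x] - d *: 1) ->
  ideal_sq I (q - \sum_i poly_scale (e i) (w i)) <->
  ideal_sq m (q.[x] - \sum_i e i *: (w i).[x]) /\ \sum_i e i * dl i = d.
Proof.
have [m1 _] := (codim1_algP hm).1 hcm.
move=> hd; rewrite ideal_sq_ev_idealP derivD derivN deriv_comb.
rewrite !hornerD !hornerN !horner_comb.
set D := q^`().[x] - _.
have hD : m (D - (d - \sum_i e i * dl i) *: 1).
  have -> : D - (d - \sum_i e i * dl i) *: 1 =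
      (q^`().[x] - d *: 1) - \sum_i e i *: ((w i)^`().[x] - dl i *: 1).
    under [X in _ = _ - X]eq_bigr => i _ do rewrite scalerBr scalerA.
    by rewrite /D scalerBl scaler_suml sumrB -!addrA -!opprD addrCA.
  apply: (ideal_memB hm hd); apply: (ideal_mem_sum hm) => i.
  exact: (ideal_memZ hm _ (hdl i)).
rewrite (ideal_congr hm hD) (alg_ideal_scale1P hm m1).
by split=> -[D2 /eqP e_dl]; split=> //; apply/eqP; move: e_dl; rewrite subr_eq0 eq_sym.
Qed.

Lemma ideal_sq_ev_combP (e : 'I_N -> k) :
  ideal_sq I (\sum_i poly_scale (e i) (w i)) <->
  ideal_sq m (\sum_i e i *: (w i).[x]) /\ \sum_i e i * dl i = 0.
Proof.
have hd0 : m ((0 : {poly A})^`().[x] - 0 *: 1).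
  by rewrite deriv0 horner0 scale0r subr0; exact: (ideal_mem0 hm).
by rewrite -ideal_sqN -sub0r (ideal_sq_ev_subP _ hd0) horner0 sub0r ideal_sqN.
Qed.

End Criterion.

Lemma tangent_dim_ev_idealS n :
  tangent_dim (@alg_scale k A) m n -> tangent_dim (@poly_scale k A) I n.+1.
Proof.
have [m1 span_m] := (codim1_algP hm).1 hcm.
case=> v [mv span free].
pose j := @ord_max n.
pose w i := if unlift j i is Some i' then (v i')%:P else 'X - x%:P.
pose dl i : k := if unlift j i is Some _ then 0 else 1.
have hdl i : m ((w i)^`().[x] - dl i *: 1).
  rewrite /w /dl; case: unliftP => [i'|] _.
  - by rewrite derivC horner0 scale0r subr0; exact: (ideal_mem0 hm).
  - by rewrite derivXsubC hornerC scale1r subrr; exact: (ideal_mem0 hm).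
have w_x e : \sum_i e i *: (w i).[x] = \sum_i e (lift j i) *: v i.
  rewrite (bigD1_ord j) //= /w unlift_none hornerXsubC subrr scaler0 add0r.
  by apply: eq_bigr => i _; rewrite liftK hornerC.
have e_dl e : \sum_i e i * dl i = e j.
  rewrite (bigD1_ord j) //= /dl unlift_none mulr1 big1 ?addr0 // => i _.
  by rewrite liftK mulr0.
exists w; split.
- move=> i; rewrite /ev_ideal /w; case: unliftP => [i'|] _.
  + by rewrite hornerC; exact: mv.
  + by rewrite hornerXsubC subrr; exact: (ideal_mem0 hm).
- move=> q Iq; have [c mc] := span _ Iq; have [d md] := span_m q^`().[x].
  pose e i := if unlift j i is Some i' then c i' else d.
  exists e; apply/(ideal_sq_ev_subP hdl e md); rewrite w_x e_dl /e unlift_none.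
  by under eq_bigr => i _ do rewrite liftK.
- move=> e /(ideal_sq_ev_combP hdl) []; rewrite w_x e_dl => /free e_lift ej i.
  by case: (unliftP j i) => [i'|] ->.
Qed.

Lemma tangent_dim_ev_idealSn n :
  tangent_dim (@poly_scale k A) I n.+1 -> tangent_dim (@alg_scale k A) m n.
Proof.
have [m1 span_m] := (codim1_algP hm).1 hcm.
case=> w [Iw span free].
have [dl hdl] : exists dl : 'I_n.+1 -> k, forall i, m ((w i)^`().[x] - dl i *: 1).
  apply: (@fin_all_exists _ (fun=> k) (fun i d => m ((w i)^`().[x] - d *: 1))).
  by move=> i; exact: span_m.
(* [t - l] lies in [I] with derivative [1], so some [w i] has a nonzero
   derivative class *)
have [j dlj] : exists j, dl j != 0.
  have IX : I ('X - x%:P) by rewrite /ev_ideal hornerXsubC subrr; exact: (ideal_mem0 hm).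
  have mX' : m (('X - x%:P)^`().[x] - 1 *: 1).
    by rewrite derivXsubC hornerC scale1r subrr; exact: (ideal_mem0 hm).
  have [c /(ideal_sq_ev_subP hdl _ mX') [_]] := span _ IX.
  case: (pickP (fun j => dl j != 0)) => [j dlj _ | dl0]; first by exists j.
  rewrite big1 => [/eqP|i _]; first by rewrite eq_sym oner_eq0.
  by move/negbFE/eqP: (dl0 i) => ->; rewrite mulr0.
exists (elim_vec dl j (fun i => (w i).[x])); split.
- move=> i; apply: (ideal_memB hm (Iw _)); exact: (ideal_memZ hm _ (Iw j)).
- move=> a ma.
  have Ia : I a%:P by rewrite /ev_ideal hornerC.
  have ma' : m ((a%:P)^`().[x] - 0 *: 1).
    by rewrite derivC horner0 scale0r subr0; exact: (ideal_mem0 hm).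
  have [c /(ideal_sq_ev_subP hdl _ ma') [mc c_dl]] := span _ Ia.
  by exists (fun i => c (lift j i)); rewrite hornerC (sum_elim dlj _ c_dl) in mc.
- move=> c mc i; rewrite -(elim_ext_lift dl j c i); apply: free (lift j i).
  apply/(ideal_sq_ev_combP hdl); split; last exact: sum_elim_ext.
  rewrite (sum_elim dlj _ (sum_elim_ext dlj c)).
  by under eq_bigr => i' _ do rewrite elim_ext_lift.
Qed.

End EvIdeal.

Definition ideal_const (R : nzRingType) (I : {poly R} -> Prop) (a : R) : Prop :=
  I a%:P.

Section PolyIdeal.
Variables (k : fieldType) (A : algType k) (I : {poly A} -> Prop).
Hypothesis hI : is_ideal (@poly_scale k A) I.

Lemma ideal_const_is_ideal : is_ideal (@alg_scale k A) (ideal_const I).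
Proof.
rewrite /ideal_const; split; first by rewrite polyC0; exact: (ideal_mem0 hI).
split; first by move=> a b /= Ia Ib; rewrite polyCD; exact: (ideal_memD hI Ia Ib).
split; first by move=> a /= Ia; rewrite polyCN; exact: (ideal_memN hI Ia).
split; first by move=> c a /= Ia; rewrite -poly_scaleC; exact: (ideal_memZ hI _ Ia).
split=> r a /= Ia; rewrite polyCM.
  exact: (ideal_memMl hI _ Ia).
exact: (ideal_memMr hI _ Ia).
Qed.

Hypothesis hcI : codim1 (@poly_scale k A) I.

Lemma codim1_ideal_const : codim1 (@alg_scale k A) (ideal_const I).
Proof.
have [I1 span] := (codim1_polyP hI).1 hcI.
apply/(codim1_algP ideal_const_is_ideal); split=> [|a].
  by rewrite /ideal_const polyC1.
by have [d Id] := span a%:P; exists d; rewrite /ideal_const polyCB.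
Qed.

(* [q - q(l)] is a multiple of [t - l], which lies in [I]. *)
Lemma codim1_poly_idealE : exists l, I = ev_ideal l (ideal_const I).
Proof.
have [_ span] := (codim1_polyP hI).1 hcI.
have [l IX] := span 'X; exists l.
apply: functional_extensionality => q; apply: propositional_extensionality.
have /factor_theorem [r def_q] : root (q - q.[l%:A]%:P) (l%:A).
  by rewrite /root hornerD hornerN hornerC subrr.
apply: (ideal_congr hI); rewrite def_q; exact: (ideal_memMl hI _ IX).
Qed.

End PolyIdeal.

Lemma infinite_field_uniq_seq (k : fieldType) : infinite_field k ->
  forall n, exists s : seq k, uniq s /\ size s = n.
Proof.
move=> hk; elim=> [|n [s [s_uniq s_size]]]; first by exists [::].
by have [y y_notin] := hk s; exists (y :: s); rewrite /= y_notin s_uniq s_size.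
Qed.

Lemma poly_eq0_infinite (k : fieldType) : infinite_field k ->
  forall P : {poly k}, (forall l, P.[l] = 0) -> P = 0.
Proof.
move=> hk P P_roots; apply/eqP; apply: contraT => P_neq0.
have [s [s_uniq s_size]] := infinite_field_uniq_seq hk (size P).
have s_roots : all (root P) s by apply/allP => y _; exact/eqP/P_roots.
by have := max_poly_roots P_neq0 s_roots s_uniq; rewrite s_size ltnn.
Qed.

Section Coefficients.
Variables (k : fieldType) (A : algType k) (m : A -> Prop).
Hypothesis hm : is_ideal (@alg_scale k A) m.

Lemma ideal_mem_horner (p : {poly A}) l : (forall i, m p`_i) -> m p.[l%:A].
Proof.
move=> mp; rewrite horner_coef; apply: (ideal_mem_sum hm) => i.
exact: (ideal_memMr hm _ (mp i)).
Qed.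

Hypothesis hcm : codim1 (@alg_scale k A) m.

Lemma coef_scalar_mod (p : {poly A}) :
  exists P : {poly k}, forall i, m (p - map_poly (in_alg A) P)`_i.
Proof.
have [_ span] := (codim1_algP hm).1 hcm.
elim/poly_ind: p => [|p a [P mP]].
  by exists 0 => i; rewrite rmorph0 subr0 coef0; exact: (ideal_mem0 hm).
have [d md] := span a; exists (P * 'X + d%:P) => i.
rewrite rmorphD rmorphM /= map_polyX map_polyC /= opprD addrACA -mulrBl -polyCB.
by rewrite coefD coefMX coefC; case: i => [|i] /=; rewrite ?add0r ?addr0.
Qed.

Hypothesis hk : infinite_field k.

Lemma coef_mem_of_horner (p : {poly A}) : (forall l, m p.[l%:A]) -> forall i, m p`_i.
Proof.
move=> mp; have [m1 _] := (codim1_algP hm).1 hcm.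
have [P mP] := coef_scalar_mod p.
suff P0 : P = 0 by move: mP; rewrite P0 rmorph0 subr0.
apply: (poly_eq0_infinite hk) => l; apply/(alg_ideal_scale1P hm m1).
have := ideal_mem_horner l mP; rewrite hornerD hornerN.
rewrite -[l%:A]/(in_alg A l) horner_map /= => mPl.
exact: (ideal_congr hm mPl).1 (mp l).
Qed.

End Coefficients.

Theorem lemma1p1 (k : fieldType) (hk : infinite_field k)
    (A : algType k) (hA : fin_gen_alg A) (s : nat) (hs : (0 < s)%N)
    (p : {poly A}) :
  Jtan (@poly_scale k A) s.+1 p <-> (forall i : nat, Jtan (@alg_scale k A) s p`_i).
Proof.
split=> [Jp i m hm hcm hsm | Jp I hI hcI hsI].
- move: i; apply: (coef_mem_of_horner hm hcm hk) => l.
  exact: Jp _ (ev_ideal_is_ideal l hm) (codim1_ev_ideal l hm hcm)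
    (tangent_dim_ev_idealS l hm hcm hsm).
- have [l def_I] := codim1_poly_idealE hI hcI.
  have hm := ideal_const_is_ideal hI; have hcm := codim1_ideal_const hI hcI.
  rewrite def_I in hsI *; apply: (ideal_mem_horner hm) => i.
  exact: Jp hm hcm (tangent_dim_ev_idealSn hm hcm hsI).
Qed.
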